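(* For every $h>2/3$ there is an instance with two groups in which all agents have binary valuations and no allocation is $h$-democratic positive-MMS-fair.
   Context: There is a finite set $G$ of goods and $k$ groups $A_1,\dots,A_k$ of agents ($n_i\ge1$ agents in $A_i$); here $k=2$. An agent $a$ is binary if her utility is additive, $u_a(X)=\sum_{g\in X}u_a(\{g\})$, with $u_a(\{g\})\in\{0,1\}$. An allocation is a partition $(G_1,\dots,G_k)$ of $G$; every agent of $A_i$ gets utility $u_a(G_i)$. $\mathrm{MMS}^k_a(G)$ is the maximum over partitions of $G$ into $k$ sets of the minimum utility of $a$ for a set of the partition. The allocation is positive-MMS-fair for $a\in A_i$ if $\mathrm{MMS}^k_a(G)>0$ implies $u_a(G_i)>0$. For $h\in[0,1]$, an allocation is $h$-democratic fair (for a given individual fairness notion) if for every $i$, at least $h\cdot n_i$ agents of $A_i$ find it fair. *)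

From HB Require Import structures.
From mathcomp Require Import all_boot all_order all_algebra.
Set Implicit Arguments. Unset Strict Implicit. Unset Printing Implicit Defensive.
Import Order.TTheory GRing.Theory Num.Theory.

Definition bin_util (G : finType) (b : G -> bool) (X : {set G}) : nat :=
  \sum_(g in X) (b g : nat).

(* The i-th bundle of a partition of G into k sets, encoded by f : G -> 'I_k. *)
Definition bundle (G : finType) (k : nat) (f : {ffun G -> 'I_k}) (j : 'I_k)
  : {set G} := [set g | f g == j].

(* The neutral element v [set: G] of the inner minimum
   is irrelevant for k >= 1 (bundles are subsets of G, v is monotone). *)
Definition mms (G : finType) (k : nat) (v : {set G} -> nat) : nat :=
  \max_(f : {ffun G -> 'I_k}) \big[minn/v [set: G]]_(j < k) v (bundle f j).

Definition pos_mms_fair (G : finType) (k : nat) (v : {set G} -> nat)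
  (f : {ffun G -> 'I_k}) (i : 'I_k) : bool :=
  (0 < mms k v)%N ==> (0 < v (bundle f i))%N.

Definition democratic_fair (R : realFieldType) (h : R) (k : nat)
  (n : 'I_k -> nat) (fair : forall i : 'I_k, 'I_(n i) -> bool) : Prop :=
  forall i : 'I_k, (h * (n i)%:R <= (#|[set a | fair i a]|)%:R)%R.

From HB Require Import structures.
From mathcomp Require Import all_boot all_order all_algebra.
From mathcomp Require Import zify.
Import Order.TTheory GRing.Theory Num.Theory.

Set Implicit Arguments.
Unset Strict Implicit.
Unset Printing Implicit Defensive.

(* Three goods and, in each of the two groups, three agents, agent a valuing
   every good except good a.  Each agent can split the goods into two bundles
   both containing a valued good, so her MMS is positive.  Since h > 2/3, all
   three agents of a group must be satisfied, so the group's bundle is not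
   contained in {a} for any a: it has at least two goods.  Two disjoint
   bundles of at least two goods do not fit in three goods. *)

Definition all_but {T : eqType} (a : T) : T -> bool := fun g => g != a.

Lemma bin_util_gt0 (G : finType) (b : G -> bool) (X : {set G}) :
  (0 < bin_util b X)%N = [exists g in X, b g].
Proof.
rewrite lt0n /bin_util sum_nat_eq0 negb_forall; apply: eq_existsb => g.
by rewrite negb_imply; case: (b g).
Qed.

Lemma mms2_gt0 (G : finType) (v : {set G} -> nat) (f : {ffun G -> 'I_2}) :
  (0 < v (bundle f ord0))%N -> (0 < v (bundle f ord_max))%N ->
  (0 < v [set: G])%N -> (0 < mms 2 v)%N.
Proof.
move=> v0 v1 vT; apply: leq_trans (leq_bigmax f).
by rewrite !big_ord_recl big_ord0 /= !leq_min v0 v1 vT.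
Qed.

Lemma mms2_all_but_gt0 (G : finType) (a : G) :
  (2 < #|G|)%N -> (0 < mms 2 (bin_util (all_but a)))%N.
Proof.
move=> G3; have /card_gt0P[x /[!inE] xa] : (0 < #|[set~ a]|)%N.
  by rewrite cardsC1; lia.
have /card_gt0P[y /[!inE] /andP[yx ya]] : (0 < #|[set~ a] :\ x|)%N.
  by have := cardsD1 x [set~ a]; rewrite cardsC1 !inE xa; lia.
pose f : {ffun G -> 'I_2} := [ffun g => if g == x then ord0 else ord_max].
have all_but_gt0 g (X : {set G}) : g \in X -> g != a -> (0 < bin_util (all_but a) X)%N.
  by move=> gX ga; rewrite bin_util_gt0; apply/existsP; exists g; rewrite gX.
apply: (mms2_gt0 (f := f)).
- by apply: (all_but_gt0 x) => //; rewrite inE ffunE eqxx.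
- by apply: (all_but_gt0 y) => //; rewrite inE ffunE (negbTE yx).
- exact: (all_but_gt0 x).
Qed.

Lemma meets_all_but_card_gt1 (G : finType) (X : {set G}) (a0 : G) :
  (forall a, [exists g in X, all_but a g]) -> (1 < #|X|)%N.
Proof.
move=> avoid; have /existsP[g /andP[gX _]] := avoid a0.
have /existsP[g' /andP[g'X g'g]] := avoid g.
by rewrite (cardsD1 g) gX ltnS card_gt0; apply/set0Pn; exists g'; rewrite !inE g'X andbT.
Qed.

Lemma card_bundle2 (G : finType) (f : {ffun G -> 'I_2}) :
  (#|bundle f ord0| + #|bundle f ord_max|)%N = #|G|.
Proof.
rewrite -(cardsC (bundle f ord0)); congr addn; apply: eq_card => g.
by rewrite !inE; case: (f g) => -[|[|]].
Qed.

Local Open Scope ring_scope.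

Lemma large_fraction_setT (R : realFieldType) (h : R) (n : nat) (A : {set 'I_n}) :
  n.-1%:R < h * n%:R -> h * n%:R <= #|A|%:R -> A = [set: 'I_n].
Proof.
move=> hn hA; apply/eqP; rewrite eqEcard subsetT cardsT card_ord.
have : n.-1%:R < #|A|%:R :> R by apply: lt_le_trans hA.
by rewrite ltr_nat; case: n {hn hA} A => //= n A.
Qed.

Theorem mainTheorem3 (R : realFieldType) (h : R) :
  2%:R / 3%:R < h -> h <= 1 ->
  exists (G : finType) (n : 'I_2 -> nat)
         (u : forall i : 'I_2, 'I_(n i) -> G -> bool),
    (forall i, (0 < n i)%N) /\
    forall f : {ffun G -> 'I_2},
      ~ @democratic_fair R h 2 n (fun i a => pos_mms_fair (bin_util (u i a)) f i).
Proof.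
move=> h23 _.
exists 'I_3, (fun _ => 3%N), (fun _ a => all_but a); split=> // f fair.
have h3 : 3.-1%:R < h * 3%:R :> R by rewrite /= -ltr_pdivrMr ?ltr0n.
have large i : (1 < #|bundle f i|)%N.
  apply: (meets_all_but_card_gt1 ord0) => a.
  have /setP/(_ a) := large_fraction_setT h3 (fair i).
  rewrite !inE /pos_mms_fair bin_util_gt0 mms2_all_but_gt0; last by rewrite card_ord.
  by rewrite implyTb.
by have := card_bundle2 f; rewrite card_ord; have := large ord0; have := large ord_max; lia.
Qed.
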